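(* Let $A$ be a finite set, $n\ge3$, and let $\rho\subseteq A^n$ be a strongly rich relation preserved by a WNU vector-function. Then there exist an abelian group structure $(A;+)$ on $A$ and bijections $\phi_1,\dots,\phi_n:A\to A$ such that $$\rho=\{(x_1,\dots,x_n)\in A^n:\ \phi_1(x_1)+\phi_2(x_2)+\dots+\phi_n(x_n)=0\}.$$
   Context: $\rho\subseteq A^n$ is strongly rich if for every tuple $(a_1,\dots,a_n)\in A^n$ and every $j\in\{1,\dots,n\}$ there is a unique $b\in A$ with $(a_1,\dots,a_{j-1},b,a_{j+1},\dots,a_n)\in\rho$. A WNU is an $m$-ary ($m\ge2$) operation $f$ on $A$ with $f(x,\dots,x)=x$ and $f(y,x,\dots,x)=f(x,y,x,\dots,x)=\dots=f(x,\dots,x,y)$. A WNU vector-function of arity $m$ is a tuple $(f_1,\dots,f_n)$ of $m$-ary WNUs on $A$; it preserves $\rho$ if for all $\alpha^1,\dots,\alpha^m\in\rho$ the tuple $(f_1(\alpha^1(1),\dots,\alpha^m(1)),\dots,f_n(\alpha^1(n),\dots,\alpha^m(n)))$ lies in $\rho$ (a single WNU $f$ preserving $\rho$ is the case $f_1=\dots=f_n=f$). *)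

From mathcomp Require Import all_boot.
Set Implicit Arguments. Unset Strict Implicit. Unset Printing Implicit Defensive.

Definition tup (A : finType) (n : nat) := {ffun 'I_n -> A}.

Definition upd (A : finType) n (a : tup A n) (j : 'I_n) (b : A) : tup A n :=
  [ffun i => if i == j then b else a i].

Definition strongly_rich (A : finType) n (rho : {set tup A n}) : Prop :=
  forall (a : tup A n) (j : 'I_n),
    exists! b : A, upd a j b \in rho.

Definition op_m (A : finType) (m : nat) := {ffun 'I_m -> A} -> A.

Definition one_diff (A : finType) m (x y : A) (k : 'I_m) : {ffun 'I_m -> A} :=
  [ffun i => if i == k then y else x].

Definition is_WNU (A : finType) (m : nat) (f : op_m A m) : Prop :=
  (2 <= m) /\
  (forall x : A, f [ffun _ => x] = x) /\
  (forall (x y : A) (k l : 'I_m), f (one_diff x y k) = f (one_diff x y l)).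

Definition WNU_vector (A : finType) (n m : nat) (f : 'I_n -> op_m A m) : Prop :=
  forall i, is_WNU (f i).

Definition vf_preserves (A : finType) n m (f : 'I_n -> op_m A m)
    (rho : {set tup A n}) : Prop :=
  forall alpha : 'I_m -> tup A n,
    (forall k, alpha k \in rho) ->
    [ffun i => f i [ffun k => alpha k i]] \in rho.

Definition preserved_by_some_WNU_vector (A : finType) n (rho : {set tup A n}) : Prop :=
  exists (m : nat) (f : 'I_n -> op_m A m), WNU_vector f /\ vf_preserves f rho.

Definition abelian_group (A : Type) (add : A -> A -> A) (zero : A) (opp : A -> A) : Prop :=
  (forall x y z, add x (add y z) = add (add x y) z) /\
  (forall x y, add x y = add y x) /\
  (forall x, add zero x = x) /\
  (forall x, add (opp x) x = zero).

Definition lin_sum (A : finType) n (add : A -> A -> A) (zero : A)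
    (phi : 'I_n -> A -> A) (x : tup A n) : A :=
  foldr add zero [seq phi i (x i) | i <- enum 'I_n].

From mathcomp Require Import all_boot.
Set Implicit Arguments. Unset Strict Implicit. Unset Printing Implicit Defensive.

(* Fix a coordinate z.  Strong richness makes x_z a function [solve] of the
   other coordinates, so that rho is the graph x_z = solve x, and the
   preserving WNU vector-function makes [solve] a homomorphism from (f_i)_i to
   f_z.  For i <> z the map t |-> solve (c with x_i := t) is a bijection
   [chart i]; read through these charts, [solve] becomes a map A^n -> A
   commuting with the single WNU f_z, and its restriction to two coordinates
   i1, i2 <> z (this is where n >= 3 is needed) is a cancellative binary
   operation with neutral element solve c, respected by f_z.
   A WNU respecting a unital operation forces it to be commutative and
   associative: a = f(a,...,a) is the m-fold sum of the slice f(0,..,a,..,0),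
   so the slice is a bijection, and moving the two summands of f(a,b,0,...,0)
   between argument positions gives commutativity and associativity.  The
   same two-point trick shows that every map commuting with the WNU is
   additive, so solve x = sum_{i <> z} chart_i(x_i), and x lies in rho iff
   -x_z + sum_{i <> z} chart_i(x_i) = 0. *)


Definition pick_preim (A : finType) (f : A -> A) (d y : A) : A :=
  odflt d [pick x | f x == y].

Lemma f_pick_preim (A : finType) (f : A -> A) d :
  injective f -> cancel (pick_preim f d) f.
Proof.
move=> f_inj y; have [g _ gK] := injF_bij f_inj.
rewrite /pick_preim; case: pickP => [x /eqP // | no_preim].
by have := no_preim (g y); rewrite gK eqxx.
Qed.

Lemma pick_preim_f (A : finType) (f : A -> A) d :
  injective f -> cancel f (pick_preim f d).
Proof. by move=> f_inj x; apply: (f_inj); rewrite (f_pick_preim d f_inj). Qed.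

Section WNUEndomorphism.
Variables (A : finType) (m : nat) (F : op_m A m) (add : A -> A -> A) (zero : A).
Variables (k0 k1 : 'I_m).
Hypotheses (k01 : k0 != k1) (F_WNU : is_WNU F).
Hypotheses (add0x : left_id zero add) (addx0 : right_id zero add).
Hypothesis F_add : forall x y : {ffun 'I_m -> A},
  F [ffun k => add (x k) (y k)] = add (F x) (F y).

Lemma F_const x : F [ffun _ => x] = x.
Proof. by case: F_WNU => _ [F_idem _]; apply: F_idem. Qed.

Definition wnu_slice a := F (one_diff zero a k0).

Lemma wnu_sliceE k a : F (one_diff zero a k) = wnu_slice a.
Proof. by case: F_WNU => _ [_ F_wnu]; apply: F_wnu. Qed.

Lemma wnu_slice0 : wnu_slice zero = zero.
Proof.
by rewrite -[RHS]F_const; congr F; apply/ffunP=> k; rewrite !ffunE if_same.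
Qed.

Definition two_point a b : {ffun 'I_m -> A} :=
  [ffun k => if k == k0 then a else if k == k1 then b else zero].

Lemma two_point0 a : two_point a zero = one_diff zero a k0.
Proof. by apply/ffunP=> k; rewrite !ffunE if_same. Qed.

Lemma F_two_point a b : F (two_point a b) = add (wnu_slice a) (wnu_slice b).
Proof.
rewrite -(wnu_sliceE k1 b) -F_add; congr F; apply/ffunP=> k; rewrite !ffunE.
have [->|_] := eqVneq k k0; first by rewrite (negbTE k01) addx0.
by rewrite add0x.
Qed.

Lemma F_two_point_swap a b : F (two_point a b) = add (wnu_slice b) (wnu_slice a).
Proof.
rewrite -(wnu_sliceE k1 b) -F_add; congr F; apply/ffunP=> k; rewrite !ffunE.
have [->|_] := eqVneq k k0; first by rewrite (negbTE k01) add0x.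
by rewrite addx0.
Qed.

Lemma F_indicator a (s : seq 'I_m) : uniq s ->
  F [ffun k => if k \in s then a else zero] = iter (size s) (add (wnu_slice a)) zero.
Proof.
elim: s => [_|i s IHs /= /andP[i_notin_s s_uniq]].
  by rewrite -[RHS]F_const; congr F; apply/ffunP=> k; rewrite !ffunE.
rewrite -IHs // -(wnu_sliceE i a) -F_add; congr F; apply/ffunP=> k.
rewrite !ffunE in_cons; have [->|_] := eqVneq k i; last by rewrite add0x.
by rewrite (negbTE i_notin_s) addx0.
Qed.

Lemma wnu_slice_iter a : iter m (add (wnu_slice a)) zero = a.
Proof.
have := F_indicator a (enum_uniq 'I_m); rewrite size_enum_ord => <-.
by rewrite -[RHS]F_const; congr F; apply/ffunP=> k; rewrite !ffunE mem_enum.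
Qed.

Lemma wnu_slice_inj : injective wnu_slice.
Proof. by move=> a b eq_ab; rewrite -(wnu_slice_iter a) -(wnu_slice_iter b) eq_ab. Qed.

Lemma wnu_slice_add a b : wnu_slice (add a b) = add (wnu_slice a) (wnu_slice b).
Proof.
rewrite /wnu_slice -F_add; congr F; apply/ffunP=> k; rewrite !ffunE.
by case: ifP; rewrite ?addx0.
Qed.

Lemma wnu_addC : commutative add.
Proof.
have [psi _ psiK] := injF_bij wnu_slice_inj.
by move=> u v; rewrite -(psiK u) -(psiK v) -F_two_point F_two_point_swap.
Qed.

Lemma wnu_addA : associative add.
Proof.
have [psi _ psiK] := injF_bij wnu_slice_inj.
move=> u v w; rewrite -(psiK u) -(psiK v) -(psiK w).
set a := psi u; set b := psi v; set c := psi w.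
have split_sum : two_point (add a b) (add zero c)
               = [ffun k => add (two_point a zero k) (two_point b c k)].
  apply/ffunP=> k; rewrite !ffunE.
  by case: ifP => // _; case: ifP => // _; rewrite addx0.
have := congr1 F split_sum; rewrite F_add !F_two_point wnu_slice_add add0x.
by rewrite wnu_slice0 addx0 => ->.
Qed.

Section CommutingMaps.
Variables (I : finType) (G : {ffun I -> A} -> A).
Hypothesis G_F : forall x : 'I_m -> {ffun I -> A},
  G [ffun i => F [ffun k => x k i]] = F [ffun k => G (x k)].
Hypothesis G0 : G [ffun _ => zero] = zero.

Lemma G_two_point (r s : {ffun I -> A}) :
  G [ffun i => F (two_point (r i) (s i))] = F (two_point (G r) (G s)).
Proof.
pose x k := if k == k0 then r else if k == k1 then s else [ffun _ => zero].
have rows_x : [ffun i => F (two_point (r i) (s i))] = [ffun i => F [ffun k => x k i]].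
  apply/ffunP=> i; rewrite !ffunE; congr F; apply/ffunP=> k; rewrite !ffunE /x.
  by case: ifP => // _; case: ifP; rewrite ?ffunE.
rewrite rows_x G_F; congr F; apply/ffunP=> k; rewrite !ffunE /x.
by case: ifP => // _; case: ifP.
Qed.

Lemma G_slice (r : {ffun I -> A}) : G [ffun i => wnu_slice (r i)] = wnu_slice (G r).
Proof.
have := G_two_point r [ffun _ => zero]; rewrite G0 two_point0 /wnu_slice => <-.
by congr G; apply/ffunP=> i; rewrite !ffunE two_point0.
Qed.

Lemma wnu_commuting_additive (p q : {ffun I -> A}) :
  G [ffun i => add (p i) (q i)] = add (G p) (G q).
Proof.
have [psi _ psiK] := injF_bij wnu_slice_inj.
pose P := [ffun i => psi (p i)]; pose Q := [ffun i => psi (q i)].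
have sliceP : p = [ffun i => wnu_slice (P i)] by apply/ffunP=> i; rewrite !ffunE psiK.
have sliceQ : q = [ffun i => wnu_slice (Q i)] by apply/ffunP=> i; rewrite !ffunE psiK.
rewrite {2}sliceP {2}sliceQ !G_slice -F_two_point -G_two_point.
by congr G; apply/ffunP=> i; rewrite !ffunE F_two_point !psiK.
Qed.

End CommutingMaps.
End WNUEndomorphism.

Section MonoidSums.
Variables (A : finType) (add : A -> A -> A) (zero : A).
Hypotheses (addA : associative add) (addC : commutative add) (add0x : left_id zero add).

Lemma foldr_add_extract (I : eqType) (y : I -> A) (z : I) (s : seq I) : uniq s ->
  foldr add zero [seq y i | i <- s] =
  add (if z \in s then y z else zero)
      (foldr add zero [seq if i == z then zero else y i | i <- s]).
Proof.
elim: s => [_|i s IHs /andP[i_notin_s s_uniq]] /=; first by rewrite add0x.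
rewrite IHs // in_cons; have [<-|i_neq_z] := eqVneq i z.
  by rewrite (negbTE i_notin_s) add0x.
by rewrite !addA (addC (y i)).
Qed.

Variables (n : nat) (G : tup A n -> A).
Hypothesis G_add : forall p q : tup A n,
  G [ffun i => add (p i) (q i)] = add (G p) (G q).
Hypothesis G0 : G [ffun _ => zero] = zero.

Lemma additive_foldr (u : tup A n) :
  G u = foldr add zero [seq G (upd [ffun _ => zero] i (u i)) | i <- enum 'I_n].
Proof.
have partial_sum s : uniq s -> G [ffun i => if i \in s then u i else zero] =
    foldr add zero [seq G (upd [ffun _ => zero] i (u i)) | i <- s].
  elim: s => [_|i s IHs /andP[i_notin_s s_uniq]] /=.
    by rewrite -G0; congr G; apply/ffunP=> j; rewrite !ffunE.
  rewrite -IHs // -G_add; congr G; apply/ffunP=> j; rewrite !ffunE in_cons.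
  have [->|_] := eqVneq j i; first by rewrite (negbTE i_notin_s) addC add0x.
  by rewrite add0x.
rewrite -partial_sum ?enum_uniq //; congr G.
by apply/ffunP=> j; rewrite ffunE mem_enum.
Qed.

End MonoidSums.

Lemma upd_id (A : finType) n (d : tup A n) j : upd d j (d j) = d.
Proof. by apply/ffunP=> i; rewrite ffunE; case: eqP => [->|]. Qed.

Lemma upd_updC (A : finType) n (d : tup A n) i j a b :
  i != j -> upd (upd d i a) j b = upd (upd d j b) i a.
Proof.
move=> i_neq_j; apply/ffunP=> k; rewrite !ffunE.
by have [->|//] := eqVneq k i; rewrite (negbTE i_neq_j).
Qed.

Section StronglyRich.
Variables (A : finType) (n : nat) (rho : {set tup A n}) (z : 'I_n).
Hypothesis rho_rich : strongly_rich rho.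

Lemma rich_uniq (d : tup A n) j b b' :
  upd d j b \in rho -> upd d j b' \in rho -> b = b'.
Proof. by have [b0 [_ b0_uniq]] := rho_rich d j => /b0_uniq <- /b0_uniq <-. Qed.

Definition solve (d : tup A n) : A := odflt (d z) [pick b | upd d z b \in rho].

Lemma solve_spec (d : tup A n) : upd d z (solve d) \in rho.
Proof.
rewrite /solve; case: pickP => [b //|no_sol].
by have [b [b_in _]] := rho_rich d z; have := no_sol b; rewrite b_in.
Qed.

Lemma mem_rhoE x : x \in rho <-> x z = solve x.
Proof.
split=> [x_in|x_z]; last by have := solve_spec x; rewrite -x_z upd_id.
by apply: (@rich_uniq x z); rewrite ?upd_id ?solve_spec.
Qed.

Lemma solve_ext (d d' : tup A n) : (forall i, i != z -> d i = d' i) -> solve d = solve d'.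
Proof.
move=> eq_dd'; have eq_upd b : upd d z b = upd d' z b.
  by apply/ffunP=> i; rewrite !ffunE; case: eqVneq => // /eq_dd'.
by apply: (rich_uniq (solve_spec d)); rewrite eq_upd solve_spec.
Qed.

Lemma solve_upd_inj (d : tup A n) i : i != z -> injective (fun t => solve (upd d i t)).
Proof.
move=> i_neq_z t t' /= eq_sol.
apply: (@rich_uniq (upd d z (solve (upd d i t))) i).
  by rewrite -upd_updC // solve_spec.
by rewrite -upd_updC // eq_sol solve_spec.
Qed.

Variables (m : nat) (f : 'I_n -> op_m A m).
Hypothesis f_pres : vf_preserves f rho.

Lemma solve_hom (d : 'I_m -> tup A n) :
  solve [ffun i => f i [ffun k => d k i]] = f z [ffun k => solve (d k)].
Proof.
have /mem_rhoE := f_pres (fun k => solve_spec (d k)); rewrite ffunE => sol_upd.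
transitivity (f z [ffun k => upd (d k) z (solve (d k)) z]); last first.
  by congr (f z _); apply/ffunP=> k; rewrite !ffunE eqxx.
rewrite sol_upd; apply: solve_ext => i i_neq_z; rewrite !ffunE; congr (f i _).
by apply/ffunP=> k; rewrite !ffunE (negbTE i_neq_z).
Qed.

End StronglyRich.

Section LinearForm.
Variables (A : finType) (n m : nat) (rho : {set tup A n}) (f : 'I_n -> op_m A m).
Hypotheses (rho_rich : strongly_rich rho) (f_WNU : WNU_vector f).
Hypothesis f_pres : vf_preserves f rho.
Variables (z i1 i2 : 'I_n) (k0 k1 : 'I_m) (c : tup A n).
Hypotheses (i1_neq_z : i1 != z) (i2_neq_z : i2 != z) (i1_neq_i2 : i1 != i2).
Hypothesis k01 : k0 != k1.

Definition rzero := solve rho z c.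
Definition chart i x := solve rho z (upd c i x).
Definition unchart i := pick_preim (chart i) (c i).

Lemma chart_c i : chart i (c i) = rzero.
Proof. by rewrite /chart upd_id. Qed.

Lemma chart_inj i : i != z -> injective (chart i).
Proof. exact: solve_upd_inj. Qed.

Lemma chartK i : i != z -> cancel (chart i) (unchart i).
Proof. by move=> i_neq_z; apply/pick_preim_f/chart_inj. Qed.

Lemma unchartK i : i != z -> cancel (unchart i) (chart i).
Proof. by move=> i_neq_z; apply/f_pick_preim/chart_inj. Qed.

Lemma unchart0 i : i != z -> unchart i rzero = c i.
Proof. by move=> i_neq_z; rewrite -(chart_c i) chartK. Qed.

Lemma f_const i x : f i [ffun _ => x] = x.
Proof. exact: F_const. Qed.

Lemma chart_hom i (x : {ffun 'I_m -> A}) : i != z ->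
  chart i (f i x) = f z [ffun k => chart i (x k)].
Proof.
move=> i_neq_z; rewrite /chart -(solve_hom z rho_rich f_pres); congr solve.
apply/ffunP=> j; rewrite !ffunE; have [->|j_neq_i] := eqVneq j i.
  by congr (f i _); apply/ffunP=> k; rewrite !ffunE eqxx.
by rewrite -[LHS](f_const j); congr (f j _); apply/ffunP=> k; rewrite !ffunE (negbTE j_neq_i).
Qed.

Lemma unchart_hom i (x : {ffun 'I_m -> A}) : i != z ->
  unchart i (f z x) = f i [ffun k => unchart i (x k)].
Proof.
move=> i_neq_z; apply: (chart_inj i_neq_z); rewrite unchartK // chart_hom //.
by congr (f z _); apply/ffunP=> k; rewrite !ffunE unchartK.
Qed.

Definition csolve (u : tup A n) := solve rho z [ffun i => unchart i (u i)].

Lemma csolve_single i a : csolve (upd [ffun _ => rzero] i a) = if i == z then rzero else a.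
Proof.
have [->|i_neq_z] := eqVneq i z.
  by apply: (solve_ext rho_rich) => j j_neq_z; rewrite !ffunE (negbTE j_neq_z) unchart0.
rewrite -[RHS](unchartK i_neq_z) /csolve /chart.
apply: (solve_ext rho_rich) => j j_neq_z; rewrite !ffunE.
by have [->|_] := eqVneq j i; rewrite ?unchart0.
Qed.

Lemma csolve0 : csolve [ffun _ => rzero] = rzero.
Proof.
have -> : [ffun _ => rzero] = upd [ffun _ => rzero] z rzero.
  by apply/ffunP=> i; rewrite !ffunE if_same.
by rewrite csolve_single eqxx.
Qed.

Lemma csolve_hom (u : 'I_m -> tup A n) :
  csolve [ffun i => f z [ffun k => u k i]] = f z [ffun k => csolve (u k)].
Proof.
rewrite /csolve -(solve_hom z rho_rich f_pres); apply: (solve_ext rho_rich) => i i_neq_z.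
by rewrite !ffunE unchart_hom //; congr (f i _); apply/ffunP=> k; rewrite !ffunE.
Qed.

Definition radd u v := csolve (upd (upd [ffun _ => rzero] i2 v) i1 u).

Lemma raddx0 : right_id rzero radd.
Proof.
move=> u; rewrite /radd.
have -> : upd [ffun _ => rzero] i2 rzero = [ffun _ => rzero].
  by apply/ffunP=> i; rewrite !ffunE if_same.
by rewrite csolve_single (negbTE i1_neq_z).
Qed.

Lemma radd0x : left_id rzero radd.
Proof.
move=> v; rewrite /radd.
have -> : upd (upd [ffun _ => rzero] i2 v) i1 rzero = upd [ffun _ => rzero] i2 v.
  apply/ffunP=> j; rewrite !ffunE.
  by have [->|//] := eqVneq j i1; rewrite (negbTE i1_neq_i2).
by rewrite csolve_single (negbTE i2_neq_z).
Qed.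

Lemma f_radd (x y : {ffun 'I_m -> A}) :
  f z [ffun k => radd (x k) (y k)] = radd (f z x) (f z y).
Proof.
have i2_neq_i1 : i2 != i1 by rewrite eq_sym.
rewrite /radd -csolve_hom; congr csolve; apply/ffunP=> i; rewrite !ffunE.
have [->|i_neq_i1] := eqVneq i i1.
  by congr (f z _); apply/ffunP=> k; rewrite !ffunE eqxx.
have [->|i_neq_i2] := eqVneq i i2.
  by congr (f z _); apply/ffunP=> k; rewrite !ffunE (negbTE i2_neq_i1) eqxx.
rewrite -[RHS](f_const z rzero); congr (f z _); apply/ffunP=> k.
by rewrite !ffunE (negbTE i_neq_i1) (negbTE i_neq_i2).
Qed.

Lemma radd_inj v : injective (radd^~ v).
Proof.
pose d := [ffun j => unchart j (upd [ffun _ => rzero] i2 v j)].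
have radd_upd w : radd w v = solve rho z (upd d i1 (unchart i1 w)).
  rewrite /radd /csolve; congr solve; apply/ffunP=> j; rewrite !ffunE.
  by have [->|] := eqVneq j i1.
move=> w w' /=; rewrite !radd_upd => /(solve_upd_inj rho_rich i1_neq_z).
by move/(congr1 (chart i1)); rewrite !unchartK.
Qed.

Lemma raddC : commutative radd.
Proof. exact: wnu_addC k01 (f_WNU z) radd0x raddx0 f_radd. Qed.

Lemma raddA : associative radd.
Proof. exact: wnu_addA k01 (f_WNU z) radd0x raddx0 f_radd. Qed.

Lemma csolve_add (p q : tup A n) :
  csolve [ffun i => radd (p i) (q i)] = radd (csolve p) (csolve q).
Proof.
apply: (wnu_commuting_additive k01 (f_WNU z) radd0x raddx0 f_radd).
  exact: csolve_hom.
exact: csolve0.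
Qed.

Definition ropp x := pick_preim (radd^~ x) rzero rzero.

Lemma raddNx x : radd (ropp x) x = rzero.
Proof. exact: f_pick_preim rzero (@radd_inj x) rzero. Qed.

Lemma roppK : involutive ropp.
Proof. by move=> x; apply: (@radd_inj (ropp x)); rewrite raddNx raddC raddNx. Qed.

Lemma solve_sum x : solve rho z x =
  foldr radd rzero [seq if i == z then rzero else chart i (x i) | i <- enum 'I_n].
Proof.
have -> : solve rho z x = csolve [ffun i => chart i (x i)].
  by apply: (solve_ext rho_rich) => i i_neq_z; rewrite !ffunE chartK.
rewrite (additive_foldr raddC radd0x csolve_add csolve0); congr foldr.
by apply: eq_map => i; rewrite csolve_single ffunE.
Qed.

Definition rphi i := if i == z then ropp else chart i.

Lemma rphi_bij i : bijective (rphi i).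
Proof.
rewrite /rphi; have [_|i_neq_z] := eqVneq i z; first exact: (inv_bij roppK).
by exists (unchart i); [apply: chartK | apply: unchartK].
Qed.

Lemma lin_sumE x : lin_sum radd rzero rphi x = radd (ropp (x z)) (solve rho z x).
Proof.
rewrite /lin_sum (foldr_add_extract raddA raddC radd0x (fun i => rphi i (x i)) z)
  ?enum_uniq // mem_enum /rphi eqxx solve_sum.
by congr (radd _ (foldr _ _ _)); apply: eq_map => i; case: eqVneq.
Qed.

Lemma mem_rho_lin_sum x : x \in rho <-> lin_sum radd rzero rphi x = rzero.
Proof.
rewrite lin_sumE; split=> [/(mem_rhoE z rho_rich) <-|sum0]; first exact: raddNx.
apply/(mem_rhoE z rho_rich); apply: (@radd_inj (ropp (x z))).
by rewrite raddC raddNx raddC sum0.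
Qed.

Lemma radd_abelian_group : abelian_group radd rzero ropp.
Proof.
by split; [exact: raddA | split; [exact: raddC |
   split; [exact: radd0x | exact: raddNx]]].
Qed.

End LinearForm.

Theorem mainTheorem12 (A : finType) (n : nat) (hA : 0 < #|A|) (hn : 3 <= n)
    (rho : {set tup A n}) :
  strongly_rich rho ->
  preserved_by_some_WNU_vector rho ->
  exists (add : A -> A -> A) (zero : A) (opp : A -> A) (phi : 'I_n -> A -> A),
    abelian_group add zero opp /\
    (forall i, bijective (phi i)) /\
    (forall x : tup A n, x \in rho <-> lin_sum add zero phi x = zero).
Proof.
move=> rho_rich [m [f [f_WNU f_pres]]].
case/card_gt0P: hA => a _; pose c : tup A n := [ffun _ => a].
have n_gt0 : 0 < n by apply: leq_trans hn.
have n_gt1 : 1 < n by apply: leq_trans hn.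
pose z := Ordinal n_gt0; pose i1 := Ordinal n_gt1; pose i2 := Ordinal hn.
have [m_gt1 _] := f_WNU z.
pose k0 := Ordinal (ltnW m_gt1); pose k1 := Ordinal m_gt1.
have [i1_neq_z i2_neq_z i1_neq_i2] : [/\ i1 != z, i2 != z & i1 != i2] by [].
have k01 : k0 != k1 by [].
exists (radd rho z i1 i2 c), (rzero rho z c), (ropp rho z i1 i2 c), (rphi rho z i1 i2 c).
split.
  exact: (radd_abelian_group rho_rich f_WNU f_pres c i1_neq_z i2_neq_z i1_neq_i2 k01).
split=> [i|x].
  exact: (rphi_bij rho_rich f_WNU f_pres c i1_neq_z i2_neq_z i1_neq_i2 k01 i).
exact: (mem_rho_lin_sum rho_rich f_WNU f_pres c i1_neq_z i2_neq_z i1_neq_i2 k01 x).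
Qed.
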